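(* Let $\gamma\in\Gamma$ and $n,n'\in\mathbb{N}_+$. Then $\max\{\mathcal{H}_{n'}(\mathcal{S}_h):h\in\mathrm{RL}(n,n')\}\preceq\gamma_{\min(n',n),n'}$.
   Context: $\sigma(x)=\max(0,x)$; $\mathrm{RL}(n,n')$ ($n,n'\in\mathbb{N}_+$) is the set of maps $h:\mathbb{R}^n\to\mathbb{R}^{n'}$, $h(x)_i=\sigma(\langle x,w_i\rangle+b_i)$ for some $W\in\mathbb{R}^{n'\times n}$ with rows $w_i$, $b\in\mathbb{R}^{n'}$; convention: $\mathrm{RL}(0,n')$ are constant maps $\{0\}\to\mathbb{R}^{n'}$ with $\mathcal{H}_{n'}(\mathcal{S}_h)={\rm e}_0$. $S_h(x)_i=1$ iff $\langle x,w_i\rangle+b_i>0$ else $0$; $\mathcal{S}_h=\{S_h(x):x\in\mathbb{R}^n\}$; $|s|=\sum_is_i$. $V$: sequences $(v_j)_{j\in\mathbb{N}}$ of nonnegative integers with finite sum; ${\rm e}_i$ has $({\rm e}_i)_j=\delta_{ij}$; $v\preceq w$ iff $\sum_{j\ge J}v_j\le\sum_{j\ge J}w_j$ for all $J\in\mathbb{N}$; for a finite family, $\max_i(v^{(i)})_J=\max_i\sum_{j\ge J}v^{(i)}_j-\max_i\sum_{j\ge J+1}v^{(i)}_j$. $\mathcal{H}_{n'}(\mathcal{S})=(|\{s\in\mathcal{S}:|s|=j\}|)_j$. $\Gamma$: families $(\gamma_{n,n'})_{n'\in\mathbb{N}_+,n\in\{0,\dots,n'\}}$ in $V$ with (i)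 $\max\{\mathcal{H}_{n'}(\mathcal{S}_h):h\in\mathrm{RL}(n,n')\}\preceq\gamma_{n,n'}$ for all $n'\in\mathbb{N}_+$, $n\in\{0,\dots,n'\}$, (ii) $n\le\tilde n\le n'\Rightarrow\gamma_{n,n'}\preceq\gamma_{\tilde n,n'}$. *)

From HB Require Import structures.
From mathcomp Require Import all_boot all_order all_algebra.
From Stdlib Require Import Rdefinitions.
From mathcomp Require Import boolp Rstruct.

Set Implicit Arguments.
Unset Strict Implicit.
Unset Printing Implicit Defensive.

Import Order.TTheory GRing.Theory Num.Theory.
Local Notation R := Rdefinitions.R.

(* Elements of V: finitely supported sequences of naturals, represented as
   finite lists (index j = position; entries beyond the list are 0). *)
Definition Vec := seq nat.

Definition tail (v : Vec) (J : nat) : nat := sumn (drop J v).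

Definition preceq (v w : Vec) : Prop := forall J : nat, tail v J <= tail w J.

Definition evec (i : nat) : Vec := rcons (nseq i 0) 1.

Definition pattern (n' : nat) := {ffun 'I_n' -> bool}.

Definition psize n' (s : pattern n') : nat := #|[pred i | s i]|.

(* S_h(x) for the ReLU layer h with weights W (rows w_i) and biases b *)
Local Open Scope ring_scope.
Definition actpat (n n' : nat) (W : 'I_n' -> 'I_n -> R) (b : 'I_n' -> R)
  (x : 'I_n -> R) : pattern n' :=
  [ffun i => (0 < \sum_(k < n) (W i k * x k) + b i)].

Local Close Scope ring_scope.

Definition patset (n n' : nat) (W : 'I_n' -> 'I_n -> R) (b : 'I_n' -> R)
  : {set pattern n'} :=
  [set s | `[< exists x : 'I_n -> R, actpat W b x = s >]].

Definition realizable (n n' : nat) : {set {set pattern n'}} :=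
  [set S | `[< exists (W : 'I_n' -> 'I_n -> R) (b : 'I_n' -> R), patset W b = S >]].

Definition hist (n' : nat) (S : {set pattern n'}) : Vec :=
  mkseq (fun j => #|[set s in S | psize s == j]|) n'.+1.

(* max_i over the finite family {H_{n'}(𝒮_h) : h ∈ RL(n,n')}, defined as in
   the paper: max_J = max_i tail_J - max_i tail_{J+1}.  For n = 0 the
   convention H_{n'}(𝒮_h) = e_0 is used. *)
Definition maxTail (n n' : nat) (J : nat) : nat :=
  \max_(S in realizable n n') tail (hist S) J.

Definition maxH (n n' : nat) : Vec :=
  if n == 0 then evec 0
  else mkseq (fun J => maxTail n n' J - maxTail n n' J.+1) n'.+1.

(* membership in Γ; gamma n n' stands for γ_{n,n'} (only the values with
   n' >= 1, n <= n' matter) *)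
Definition inGamma (gamma : nat -> nat -> Vec) : Prop :=
  (forall n' n : nat, 0 < n' -> n <= n' -> preceq (maxH n n') (gamma n n')) /\
  (forall n' n nt : nat, 0 < n' -> n <= nt -> nt <= n' ->
      preceq (gamma n n') (gamma nt n')).

(* An activation pattern of a layer depends on the input only through the
   pre-activation vector [W x], which ranges over the column space of [W].
   That space has dimension at most [n'], so it is also the column space of
   an [n' x n'] matrix: every layer with [n > n'] inputs has the same pattern
   set as some layer with [n'] inputs.  Hence the family maximised for
   [(n, n')] is contained in the one for [(n', n')], the maximum can only
   grow, and property (i) of [Γ] at [(min(n', n), n')] concludes. *)
From mathcomp Require Import all_boot all_algebra boolp Rstruct.
From Stdlib Require Import Rdefinitions.

Set Implicit Arguments.
Unset Strict Implicit.
Unset Printing Implicit Defensive.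
Import GRing.Theory.

Section PatternSets.
Local Open Scope ring_scope.
Local Notation R := Rdefinitions.R.

Variable n' : nat.

Definition weightmx n (W : 'I_n' -> 'I_n -> R) : 'M[R]_(n, n') :=
  \matrix_(k, i) W i k.

Lemma actpatE n (W : 'I_n' -> 'I_n -> R) b x :
  actpat W b x = [ffun i => 0 < (\row_k x k *m weightmx W) 0 i + b i].
Proof.
apply/ffunP => i; rewrite !ffunE !mxE.
by congr (0 < _ + _); apply: eq_bigr => k _; rewrite !mxE mulrC.
Qed.

Lemma patset_subset n1 n2 (W1 : 'I_n' -> 'I_n1 -> R)
    (W2 : 'I_n' -> 'I_n2 -> R) b :
  (weightmx W1 <= weightmx W2)%MS -> patset W1 b \subset patset W2 b.
Proof.
move=> sW12; apply/subsetP => s; rewrite !inE => /asboolP [x <-].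
have /submxP [u Eu] : (\row_k x k *m weightmx W1 <= weightmx W2)%MS.
  exact: submx_trans (submxMl _ _) sW12.
have row_u : \row_k u 0 k = u by apply/rowP => k; rewrite mxE.
by apply/asboolP; exists (fun k => u 0 k); rewrite !actpatE Eu row_u.
Qed.

Lemma realizable_subset_square n : realizable n n' \subset realizable n' n'.
Proof.
apply/subsetP => S; rewrite !inE => /asboolP [W [b <-]]; apply/asboolP.
pose A := (<<weightmx W>>)%MS; exists (fun i k => A k i), b.
have weightmx_A : weightmx (fun i k => A k i) = A.
  by apply/matrixP => k i; rewrite mxE.
by apply/eqP; rewrite eqEsubset !patset_subset // weightmx_A genmxE.
Qed.

End PatternSets.

Lemma tail_nth v J : tail v J = nth 0 v J + tail v J.+1.
Proof.
rewrite /tail; case: (ltnP J (size v)) => [/(drop_nth 0) -> //|vJ].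
by rewrite !drop_oversize ?nth_default // (leq_trans vJ).
Qed.

Lemma tail_succ_le v J : tail v J.+1 <= tail v J.
Proof. by rewrite (tail_nth v J) leq_addl. Qed.

Lemma preceq_trans u v w : preceq u v -> preceq v w -> preceq u w.
Proof. by move=> uv vw J; apply: leq_trans (uv J) (vw J). Qed.

Lemma tail_mkseq_diff (m : nat -> nat) K :
    (forall j, m j.+1 <= m j) -> m K = 0 ->
  forall J, tail (mkseq (fun j => m j - m j.+1) K) J = m J.
Proof.
move=> m_succ_le mK0; pose s := mkseq (fun j => m j - m j.+1) K.
have m_ge J : K <= J -> m J = 0.
  move=> /subnKC <-; elim: (J - K) => [|d IH]; first by rewrite addn0.
  by apply/eqP; rewrite -leqn0 -[X in _ <= X]IH addnS m_succ_le.
have tail_ge J : K <= J -> tail s J = m J.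
  by move=> KJ; rewrite /tail drop_oversize ?size_mkseq ?m_ge.
suff downward d J : K <= J + d -> tail s J = m J.
  by move=> J; apply: (downward K); rewrite leq_addl.
elim: d J => [|d IH] J KJd; case: (leqP K J) => [/tail_ge //|JK].
  by rewrite addn0 leqNgt JK in KJd.
by rewrite tail_nth nth_mkseq // IH ?subnK ?m_succ_le // addSnnS.
Qed.

Lemma maxTail_succ_le n n' J : maxTail n n' J.+1 <= maxTail n n' J.
Proof.
apply/bigmax_leqP => S SR; apply: leq_trans (tail_succ_le _ _) _.
exact: leq_bigmax_cond.
Qed.

Lemma maxTail_oversize n n' : maxTail n n' n'.+1 = 0.
Proof.
apply/eqP; rewrite -leqn0; apply/bigmax_leqP => S _.
by rewrite /tail drop_oversize // size_mkseq.
Qed.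

Lemma tail_maxH n n' J : 0 < n -> tail (maxH n n') J = maxTail n n' J.
Proof.
move=> n_gt0; rewrite /maxH eqn0Ngt n_gt0 /=.
exact: tail_mkseq_diff (maxTail_succ_le n n') (maxTail_oversize n n') J.
Qed.

Lemma maxTail_subset n m n' J :
  realizable n n' \subset realizable m n' -> maxTail n n' J <= maxTail m n' J.
Proof.
move=> /subsetP sRnm; apply/bigmax_leqP => S /sRnm SR.
exact: leq_bigmax_cond.
Qed.

Lemma maxH_preceq n m n' : 0 < n -> 0 < m ->
  realizable n n' \subset realizable m n' -> preceq (maxH n n') (maxH m n').
Proof.
by move=> n_gt0 m_gt0 sRnm J; rewrite !tail_maxH // maxTail_subset.
Qed.

Theorem mainTheorem5 (gamma : nat -> nat -> Vec) (Hg : inGamma gamma)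
  (n n' : nat) (Hn : 0 < n) (Hn' : 0 < n') :
  preceq (maxH n n') (gamma (minn n' n) n').
Proof.
case: Hg => maxH_preceq_gamma _.
case: (leqP n n') => [le_nn'|_]; first exact: maxH_preceq_gamma.
apply: preceq_trans (maxH_preceq_gamma n' n' Hn' (leqnn n')).
exact: maxH_preceq (realizable_subset_square n' n).
Qed.
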